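(* Let $m,n$ be natural numbers with $\min\{m,n\}\ge4$, let $\{|e_i\rangle\}_{i=0}^{m-1}$ and $\{|f_j\rangle\}_{j=0}^{n-1}$ be the canonical bases of $\mathbb{C}^m$ and $\mathbb{C}^n$, and let $a=3$ or $a>5$ (real). Let $$\mathcal{S}=\mathrm{span}\{|e_{i-2}\rangle\otimes|f_{j+1}\rangle-a|e_{i-1}\rangle\otimes|f_j\rangle+a|e_i\rangle\otimes|f_{j-1}\rangle-|e_{i+1}\rangle\otimes|f_{j-2}\rangle:\ 2\le i\le m-2,\ 2\le j\le n-2\}\subset\mathbb{C}^m\otimes\mathbb{C}^n.$$ Then $\mathcal{S}$ does not contain any non-zero vector of Schmidt rank $\le3$, and $\dim\mathcal{S}=(m-3)(n-3)$.
   Context: The Schmidt rank of $|\psi\rangle=\sum_{i,j}c_{ij}|e_i\rangle\otimes|f_j\rangle\in\mathbb{C}^m\otimes\mathbb{C}^n$ is the minimal number of terms in a decomposition $|\psi\rangle=\sum_{l=1}^r|u_l\rangle\otimes|v_l\rangle$; equivalently, the rank of the matrix $[c_{ij}]$. (The paper presents $\mathcal{S}$ as the direct sum over $3\le d\le m+n-5$ of the spans of the generators with $i+j=d+1$, which is the same subspace.) *)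

From HB Require Import structures.
From mathcomp Require Import all_boot all_order all_algebra.
From mathcomp Require Import reals.
From mathcomp Require Import complex.
Set Implicit Arguments. Unset Strict Implicit. Unset Printing Implicit Defensive.
Import Order.TTheory GRing.Theory Num.Theory.
Local Open Scope ring_scope.

(* A vector sum_{k,l} c_{kl} |e_k> (x) |f_l> of C^m (x) C^n is represented by
   its coefficient matrix [c_{kl}] : 'M[C]_(m, n), with C = R[i] the complex
   numbers over a real field R. *)

Definition schmidt_rank (C : fieldType) (m n : nat) (psi : 'M[C]_(m, n)) : nat :=
  \rank psi.

(* Coefficient matrix of the elementary tensor |e_k> (x) |f_l>
   (zero if an index is out of range; never happens for the generators). *)
Definition etensor (C : fieldType) (m n : nat) (k l : nat) : 'M[C]_(m, n) :=
  \matrix_(p < m, q < n) ((p == k :> nat) && (q == l :> nat))%:R.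

Definition gen5 (C : fieldType) (m n : nat) (a : C) (i j : nat) : 'M[C]_(m, n) :=
  @etensor C m n (i - 2)%N (j + 1)%N - a *: @etensor C m n (i - 1)%N j
  + a *: @etensor C m n i (j - 1)%N - @etensor C m n (i + 1)%N (j - 2)%N.

Definition S5 (C : fieldType) (m n : nat) (a : C) : {vspace 'M[C]_(m, n)} :=
  <<[seq @gen5 C m n a i j | i <- iota 2 (m - 3), j <- iota 2 (n - 3)]>>%VS.

From HB Require Import structures.
From mathcomp Require Import all_boot all_order all_algebra.
From mathcomp Require Import reals complex.
From mathcomp Require Import ring lra zify.
Set Implicit Arguments. Unset Strict Implicit. Unset Printing Implicit Defensive.
Import Order.TTheory GRing.Theory Num.Theory.
Local Open Scope ring_scope.

(* Attach to a coefficient matrix psi and a sequence g the polynomial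
   adiag g psi = sum_(i,l) psi_il g(l) X^(i+l). It kills every generator of S as
   soon as g solves the recurrence with characteristic polynomial
   x^3 - a x^2 + a x - 1 = (x - 1) (x^2 - (a - 1) x + 1); three independent
   solutions are l^j (j < 3) for a = 3, and b^l with b = 1/al, 1, al, where
   al + 1/al = a - 1, for a > 3.
   A matrix of rank k <= 3 is sum_(r<k) u_r w_r^T, and the w_r can be taken in
   echelon form (pairwise distinct lowest nonzero positions). The three
   conditions adiag g_j psi = 0 then form a k x k linear system over C[X] in the
   polynomials u_r, whose determinant has a nonzero (Vandermonde) lowest-order
   coefficient; hence all u_r vanish and psi = 0.
   The dimension count holds because the generators are triangular: generator
   (i, j) has the entry 1 at (i-2, j+1), where every other generator (i', j')
   with i' >= i vanishes. *)

Section Valuation.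
Variable C : fieldType.
Implicit Types (p : {poly C}) (g : nat -> C).

Definition valp p : nat := find (fun c => c != 0) p.

Lemma coef_valp_neq0 p : p != 0 -> p`_(valp p) != 0.
Proof.
move=> p0; have: has (fun c => c != 0) p.
  apply/hasP; exists (lead_coef p); last by rewrite lead_coef_eq0.
  by rewrite /lead_coef mem_nth // prednK ?leqnn // size_poly_gt0.
exact: nth_find.
Qed.

Lemma coef_lt_valp p i : (i < valp p)%N -> p`_i = 0.
Proof. by move/(before_find 0)/negbFE/eqP. Qed.

Lemma valp_gt p i : p != 0 -> (forall j, (j <= i)%N -> p`_j = 0) -> (i < valp p)%N.
Proof.
move=> p0 pi0; rewrite ltnNge; apply: contra (coef_valp_neq0 p0) => /pi0 ->.
by rewrite eqxx.
Qed.

Definition weightp g p := \poly_(l < size p) (p`_l * g l).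

Lemma coef_weightp g p l : (weightp g p)`_l = p`_l * g l.
Proof.
by rewrite coef_poly; case: ltnP => // le_p; rewrite nth_default ?mul0r.
Qed.

Fact weightp_is_linear g : linear (weightp g).
Proof. by move=> c p q; apply/polyP => l; rewrite !(coef_weightp, coefD, coefZ) mulrDl mulrA. Qed.

HB.instance Definition _ g :=
  GRing.isLinear.Build C {poly C} {poly C} _ (weightp g) (weightp_is_linear g).

Lemma weightpXn g l : weightp g 'X^l = g l *: 'X^l.
Proof.
apply/polyP => i; rewrite coef_weightp coefZ coefXn.
by case: eqP => [->|_]; rewrite ?mul1r ?mulr1 ?mul0r ?mulr0.
Qed.

Lemma weightp_valp g p :
  weightp g p = weightp (fun l => g (l + valp p)%N) (drop_poly (valp p) p) * 'X^(valp p).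
Proof.
apply/polyP => i; rewrite coefMXn !coef_weightp; case: ltnP => [/coef_lt_valp ->|le_i].
  by rewrite mul0r.
by rewrite coef_drop_poly subnK.
Qed.

(* Factoring X^(valp (w r)) out of row r leaves a matrix whose constant term is a
   G-minor scaled by the lowest coefficients of the w r. *)
Lemma det_weightp_neq0 k (G : nat -> nat -> C) (w : 'I_k -> {poly C}) :
  (forall e : 'I_k -> nat, injective e -> \det (\matrix_(r, j) G j (e r)) != 0) ->
  (forall r, w r != 0) -> injective (fun r => valp (w r)) ->
  \det (\matrix_(r, j) weightp (G j) (w r)) != 0.
Proof.
move=> G_det w0 w_inj; pose e r := valp (w r).
pose N : 'M_k := \matrix_(r, j) weightp (fun l => G j (l + e r)%N) (drop_poly (e r) (w r)).
have -> : \matrix_(r, j) weightp (G j) (w r) = diag_mx (\row_r 'X^(e r)) *m N.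
  by apply/matrixP => r j; rewrite mul_diag_mx !mxE weightp_valp mulrC.
have N_at0 : map_mx (horner_eval 0) N = diag_mx (\row_r (w r)`_(e r)) *m \matrix_(r, j) G j (e r).
  apply/matrixP => r j; rewrite mul_diag_mx !mxE /= horner_evalE horner_coef0.
  by rewrite coef_weightp coef_drop_poly.
rewrite det_mulmx det_diag mulf_neq0 //.
  by apply/prodf_neq0 => r _; rewrite mxE expf_neq0 ?polyX_eq0.
have : horner_eval 0 (\det N) != 0.
  rewrite -det_map_mx N_at0 det_mulmx det_diag mulf_neq0 ?G_det //.
  by apply/prodf_neq0 => r _; rewrite mxE coef_valp_neq0.
by apply: contraNneq => ->; rewrite rmorph0.
Qed.

End Valuation.

Section EchelonDecomposition.
Variable C : fieldType.
Implicit Types (u w : {poly C}) (g : nat -> C).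

(* [:: (u_1, w_1); ...; (u_k, w_k)] stands for sum_r u_r(x) w_r(y). *)
Definition pairsum g (rep : seq ({poly C} * {poly C})) : {poly C} :=
  \sum_(x <- rep) x.1 * weightp g x.2.

Lemma pairsum_cons g u w rep :
  pairsum g ((u, w) :: rep) = u * weightp g w + pairsum g rep.
Proof. exact: big_cons. Qed.

Definition echelon (ws : seq {poly C}) := (0 \notin ws) && uniq (map (@valp C) ws).

Lemma pairsum_reduce rep u w : echelon (unzip2 rep) ->
  exists rep' w', [/\ unzip2 rep' = unzip2 rep, w' = 0 \/ echelon (w' :: unzip2 rep) &
    forall g, pairsum g ((u, w) :: rep) = pairsum g ((u, w') :: rep')].
Proof.
move Ews : (unzip2 rep) => ws /andP [ws0 ws_uniq]; move: Ews.
(* Each elimination step raises valp w, which stays below the largest valuation M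
   in ws as long as it collides with one of them. *)
set M := \max_(v <- ws) valp v; have [d lt_d] := ubnP (M.+1 - valp w).
have {}lt_d : w != 0 -> (M.+1 - valp w < d)%N by [].
elim: d => [|d IHd] in rep w lt_d * => rep_ws;
  have [-> | w0] := eqVneq w 0; try by exists rep, 0; split=> //; left.
  by have := lt_d w0.
have [/mapP [v v_ws vw] | fresh] := boolP (valp w \in map (@valp C) ws); last first.
  exists rep, w; split=> //; right.
  by rewrite /echelon /= inE negb_or eq_sym w0 ws0 fresh ws_uniq.
have v0 : v != 0 by apply: contraNneq ws0 => <-.
have le_vM : (valp v <= M)%N by apply: leq_bigmax_seq.
rewrite -rep_ws in v_ws; move: v_ws rep_ws => /mapP [[u0 v'] + /= Ev]; subst v'.
case/splitPr => r1 r2 rep_ws.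
set c := w`_(valp w) / v`_(valp w); set w1 := w - c *: v.
have valp_w1 : w1 != 0 -> (valp w < valp w1)%N.
  move=> w10; apply: valp_gt => // j; rewrite leq_eqVlt => /predU1P [->|lt_j].
    by rewrite coefB coefZ divfK ?subrr // vw coef_valp_neq0.
  by rewrite coefB coefZ !coef_lt_valp -?vw // mulr0 subrr.
have [rep' [w' [rep'_ws w'P sum']]] :=
  IHd (r1 ++ (u0 + c *: u, v) :: r2) w1 ltac:(move=> /valp_w1; have := lt_d w0; lia)
    ltac:(by rewrite -rep_ws /unzip2 !map_cat).
exists rep', w'; split=> // g.
rewrite -sum' /pairsum !big_cons !big_cat !big_cons /=.
rewrite -[w in LHS](subrK (c *: v)) -/w1 linearD linearZ /= -!mul_polyC; ring.
Qed.

Lemma pairsum_echelon rep : exists rep',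
  [/\ echelon (unzip2 rep'), (size rep' <= size rep)%N & forall g, pairsum g rep' = pairsum g rep].
Proof.
elim: rep => [|[u w] rep [rep1 [ech1 size1 sum1]]]; first by exists [::].
have [rep2 [w' [rep21 w'P sum2]]] := pairsum_reduce u w ech1.
have size21 : size rep2 = size rep1 by move/(congr1 size): rep21; rewrite !size_map.
case: w'P => [w'0 | ech2].
  exists rep2; split=> [|/=|g].
  - by rewrite rep21.
  - by rewrite size21 (leqW size1).
  by rewrite pairsum_cons -sum1 -pairsum_cons sum2 pairsum_cons w'0 linear0 mulr0 add0r.
exists ((u, w') :: rep2); split=> [|/=|g]; rewrite /= ?rep21 ?size21 //.
by rewrite -sum2 !pairsum_cons sum1.
Qed.

Lemma pairsum_echelon_eq0 (G : nat -> nat -> C) rep :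
  (forall e : 'I_(size rep) -> nat, injective e -> \det (\matrix_(r, j) G j (e r)) != 0) ->
  echelon (unzip2 rep) -> (forall j, (j < size rep)%N -> pairsum (G j) rep = 0) ->
  forall g, pairsum g rep = 0.
Proof.
move=> G_det /andP [ws0 ws_uniq] G_ann; pose x r := nth (0, 0) rep r.
have sumE g : pairsum g rep = \sum_(r < size rep) (x r).1 * weightp g (x r).2.
  by rewrite /pairsum (big_nth (0, 0)) big_mkord.
have xE (r : 'I_(size rep)) : (x r).2 = (unzip2 rep)`_r by rewrite (nth_map (0, 0)).
pose A : 'M_(size rep) := \matrix_(r, j) weightp (G j) (x r).2.
pose y : 'rV_(size rep) := \row_r (x r).1.
have yA : y *m A = 0.
  apply/rowP => j; rewrite !mxE -[RHS](G_ann j (ltn_ord j)) sumE.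
  by apply: eq_bigr => r _; rewrite !mxE.
have detA : \det A != 0.
  apply: det_weightp_neq0 => // [r | r s]; rewrite !xE.
    by apply: contraNneq ws0 => <-; rewrite mem_nth ?size_map.
  move=> /eqP; rewrite -!(nth_map 0 0 (@valp C)) ?size_map //.
  by rewrite nth_uniq ?size_map // => /eqP /val_inj.
have y0 : y = 0.
  by apply/eqP; apply: contraNT detA => y0; apply/det0P; exists y.
move=> g; rewrite sumE big1 // => r _.
by move/rowP/(_ r): y0; rewrite !mxE => ->; rewrite mul0r.
Qed.

End EchelonDecomposition.

Lemma rVpolyE (R : nzSemiRingType) d (v : 'rV[R]_d) : rVpoly v = \sum_(i < d) v 0 i *: 'X^i.
Proof. by rewrite /rVpoly poly_def; apply: eq_bigr => i _; rewrite valK. Qed.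

Lemma memv_span_linear_eq0 (K : fieldType) (vT : vectType K) (W : lmodType K)
    (f : {linear vT -> W}) (X : seq vT) v :
  v \in <<X>>%VS -> {in X, forall x, f x = 0} -> f v = 0.
Proof.
move=> vX fX; rewrite (@coord_span _ _ _ (in_tuple X) v vX) linear_sum big1 // => i _.
by rewrite linearZZ fX ?scaler0 //; apply/(nthP 0); exists i.
Qed.

Definition solves_rec (C : fieldType) (a : C) (g : nat -> C) :=
  forall t, g t.+3 - a * g t.+2 + a * g t.+1 - g t = 0.

Section AntidiagonalPolynomial.
Variables (C : fieldType) (m n : nat).
Implicit Types (psi : 'M[C]_(m, n)) (g : nat -> C).

Definition adiag g psi : {poly C} := \sum_(i < m) 'X^i * weightp g (rVpoly (row i psi)).

Fact adiag_is_linear g : linear (adiag g).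
Proof.
move=> c psi phi; rewrite /adiag scaler_sumr -big_split; apply: eq_bigr => i _ /=.
by rewrite !linearD !linearZ /= mulrDr scalerAr.
Qed.

HB.instance Definition _ g :=
  GRing.isLinear.Build C 'M[C]_(m, n) {poly C} _ (adiag g) (adiag_is_linear g).

Lemma adiag_mulmx k g (U : 'M_(m, k)) (V : 'M_(k, n)) :
  adiag g (U *m V) = \sum_(r < k) rVpoly (row r U^T) * weightp g (rVpoly (row r V)).
Proof.
rewrite /adiag; under [RHS]eq_bigr => r _ do rewrite rVpolyE mulr_suml.
rewrite exchange_big /=; apply: eq_bigr => i _.
rewrite row_mul mulmx_sum_row !linear_sum mulr_sumr; apply: eq_bigr => r _.
by rewrite !linearZ /= -scalerAl -scalerAr !mxE.
Qed.

Lemma adiag_rank_decomp psi :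
  exists2 rep, size rep = \rank psi & forall g, adiag g psi = pairsum g rep.
Proof.
exists [seq (rVpoly (row r (col_base psi)^T), rVpoly (row r (row_base psi)))
         | r <- enum 'I_(\rank psi)].
  by rewrite size_map size_enum_ord.
by move=> g; rewrite -{1}(mulmx_base psi) adiag_mulmx /pairsum big_map big_enum.
Qed.

Lemma adiag_delta g (i : 'I_m) (l : 'I_n) : adiag g (delta_mx i l) = g l *: 'X^(i + l).
Proof.
rewrite -(mul_delta_mx (0 : 'I_1)) adiag_mulmx big_ord1 trmx_delta !row_id.
by rewrite !rVpoly_delta weightpXn -scalerAr exprD.
Qed.

Lemma adiag_inj psi : (forall g, adiag g psi = 0) -> psi = 0.
Proof.
move=> psi0; apply/matrixP => k l; rewrite mxE.
pose dl q := (q == l :> nat)%:R : C.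
have : adiag dl psi = rVpoly (row l psi^T) * 'X^l.
  rewrite rVpolyE mulr_suml; apply: eq_bigr => i _.
  have -> : weightp dl (rVpoly (row i psi)) = psi i l *: 'X^l.
    apply/polyP => q; rewrite coef_weightp coefZ coefXn /dl.
    by case: eqP => [->|]; rewrite ?coef_rVpoly_ord ?mxE ?mulr1 ?mulr0.
  by rewrite !mxE -scalerAl -scalerAr.
rewrite psi0 => /esym /eqP; rewrite mulf_eq0 expf_eq0 polyX_eq0 andbF orbF.
rewrite -(linear0 (@rVpoly C m)) => /eqP /(can_inj rVpolyK) /rowP /(_ k).
by rewrite !mxE.
Qed.

Lemma etensor_delta k l (lt_km : (k < m)%N) (lt_ln : (l < n)%N) :
  @etensor C m n k l = delta_mx (Ordinal lt_km) (Ordinal lt_ln).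
Proof. by apply/matrixP => p q; rewrite !mxE. Qed.

Lemma adiag_etensor g k l : (k < m)%N -> (l < n)%N ->
  adiag g (@etensor C m n k l) = g l *: 'X^(k + l).
Proof. by move=> lt_km lt_ln; rewrite etensor_delta adiag_delta. Qed.

Lemma adiag_gen5 a g i j : solves_rec a g ->
  (2 <= i)%N -> (i.+2 <= m)%N -> (2 <= j)%N -> (j.+2 <= n)%N -> adiag g (@gen5 C m n a i j) = 0.
Proof.
move=> g_rec le2i lt_im; case: j => [|[|t]] // _ lt_tn.
rewrite /gen5 !(linearB (adiag g), linearD (adiag g), linearZZ (adiag g)) /=.
rewrite !adiag_etensor; try lia.
have X_ij k l : (k + l = i + t.+2 - 1)%N -> 'X^(k + l) = 'X^(i + t.+2 - 1) :> {poly C}.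
  by move->.
rewrite !X_ij; try lia.
rewrite !scalerA -!scalerBl -scalerDl -scalerBl addn1 !subSS !subn0.
by rewrite g_rec scale0r.
Qed.

Lemma adiag_S5 a g psi : solves_rec a g -> psi \in @S5 C m n a -> adiag g psi = 0.
Proof.
move=> g_rec /memv_span_linear_eq0; apply => _ /allpairsP [[i j] [/= + + ->]].
by rewrite !mem_iota => /andP [le2i lt_im] /andP [le2j lt_jn]; apply: adiag_gen5 => //; lia.
Qed.

Theorem adiag_low_rank_eq0 k (G : nat -> nat -> C) psi :
  (forall k' (e : 'I_k' -> nat), (k' <= k)%N -> injective e ->
     \det (\matrix_(r, j) G j (e r)) != 0) ->
  (\rank psi <= k)%N -> (forall j, (j < k)%N -> adiag (G j) psi = 0) -> psi = 0.
Proof.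
move=> G_det rk_psi G_ann; have [rep0 size0 psiE] := adiag_rank_decomp psi.
have [rep [ech size_rep repE]] := pairsum_echelon rep0.
have le_k : (size rep <= k)%N by rewrite (leq_trans size_rep) ?size0.
apply: adiag_inj => g; rewrite psiE -repE.
apply: (pairsum_echelon_eq0 (G := G)) => // [e|j lt_j]; first exact: G_det.
by rewrite repE -psiE G_ann // (leq_trans lt_j).
Qed.

End AntidiagonalPolynomial.

Section RecurrenceSolutions.
Variable C : fieldType.

Lemma det_vandermonde_weighted (phi c : nat -> C) k (e : 'I_k -> nat) :
  injective phi -> (forall l, c l != 0) -> injective e ->
  \det (\matrix_(r, j) (c (e r) * phi (e r) ^+ j)) != 0.
Proof.
move=> phi_inj c0 e_inj.
have -> : \matrix_(r, j) (c (e r) * phi (e r) ^+ j) =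
    diag_mx (\row_r c (e r)) *m (Vandermonde k (\row_r phi (e r)))^T.
  by apply/matrixP => r j; rewrite mul_diag_mx !mxE.
rewrite det_mulmx det_diag det_tr det_Vandermonde mulf_neq0 //.
  by apply/prodf_neq0 => r _; rewrite mxE.
apply/prodf_neq0 => i _; apply/prodf_neq0 => j lt_ij; rewrite !mxE subr_eq0.
by apply: contraTneq lt_ij => /phi_inj /e_inj ->; rewrite ltnn.
Qed.

Lemma S5_low_rank_eq0 m n (a : C) (phi c : nat -> C) (psi : 'M[C]_(m, n)) :
  injective phi -> (forall l, c l != 0) ->
  (forall j, (j < 3)%N -> solves_rec a (fun l => c l * phi l ^+ j)) ->
  psi \in @S5 C m n a -> (\rank psi <= 3)%N -> psi = 0.
Proof.
move=> phi_inj c0 rec_c psiS rk_psi.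
apply: (adiag_low_rank_eq0 (G := fun j l => c l * phi l ^+ j)) rk_psi _.
  by move=> k' e _; apply: det_vandermonde_weighted.
by move=> j /rec_c /adiag_S5; apply.
Qed.

Lemma solves_rec_geom (a b : C) (g : nat -> C) : (forall t, g t = b ^+ t) ->
  b ^+ 3 - a * b ^+ 2 + a * b - 1 = 0 -> solves_rec a g.
Proof. by move=> gE b_root t; rewrite !gE !exprS -[RHS](mulr0 (b ^+ t)) -b_root; ring. Qed.

Lemma S5_three_low_rank_eq0 m n (psi : 'M[C]_(m, n)) :
  injective (fun l : nat => l%:R : C) -> psi \in @S5 C m n 3 -> (\rank psi <= 3)%N -> psi = 0.
Proof.
move=> natr_inj; apply: (S5_low_rank_eq0 natr_inj (c := fun=> 1)) => [l|j]; first exact: oner_neq0.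
by case: j => [|[|[|j]]] // _ t; rewrite !mul1r; ring.
Qed.

Lemma S5_geom_low_rank_eq0 m n (al : C) (psi : 'M[C]_(m, n)) :
  injective (GRing.exp al) -> psi \in @S5 C m n (al + al^-1 + 1) -> (\rank psi <= 3)%N ->
  psi = 0.
Proof.
move=> al_inj; have al0 : al != 0.
  by apply/eqP => al0; move: (@al_inj 1 2); rewrite al0 !expr0n => /(_ erefl).
apply: (S5_low_rank_eq0 al_inj (c := GRing.exp al^-1)) => [l|j lt_j3].
  by rewrite expf_neq0 ?invr_eq0.
apply: (@solves_rec_geom _ (al ^+ j / al)) => [t|].
  by rewrite mulrC -exprM mulnC exprM -exprMn.
by case: j lt_j3 => [|[|[|j]]] // _; field.
Qed.

End RecurrenceSolutions.

Section Dimension.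
Variables (C : fieldType) (m n : nat) (a : C).
Implicit Type Q : 'M[C]_(m - 3, n - 3).

Lemma gen5_pivot i j (p : 'I_m) (q : 'I_n) : (p + 2 <= i)%N ->
  @gen5 C m n a i j p q = ((i == p + 2) && (q == j + 1 :> nat))%N%:R.
Proof.
move=> le_pi; rewrite !mxE.
have [-> -> ->] : [/\ (p == i - 1 :> nat)%N = false, (p == i :> nat) = false &
  (p == i + 1 :> nat)%N = false] by split; apply/negbTE/eqP; lia.
have -> : (p == i - 2 :> nat)%N = (i == p + 2)%N by apply/eqP/eqP; lia.
by rewrite !mulr0 subr0 addr0 subr0.
Qed.

Definition gen5_comb Q : 'M[C]_(m, n) :=
  \sum_(s < m - 3) \sum_(t < n - 3) Q s t *: @gen5 C m n a (s + 2) (t + 2).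

Fact gen5_comb_is_linear : linear gen5_comb.
Proof.
move=> c P Q; rewrite /gen5_comb scaler_sumr -big_split; apply: eq_bigr => s _ /=.
rewrite scaler_sumr -big_split; apply: eq_bigr => t _.
by rewrite !mxE scalerDl scalerA.
Qed.

HB.instance Definition _ :=
  GRing.isLinear.Build C 'M[C]_(m - 3, n - 3) 'M[C]_(m, n) _ gen5_comb gen5_comb_is_linear.

Lemma gen5_comb_pivot Q (s : 'I_(m - 3)) (t : 'I_(n - 3)) (p : 'I_m) (q : 'I_n) :
  p = s :> nat -> q = (t + 3)%N :> nat ->
  (forall (s' : 'I_(m - 3)) t', (s' < s)%N -> Q s' t' = 0) -> gen5_comb Q p q = Q s t.
Proof.
move=> ps qt Q0; rewrite [in RHS](matrix_sum_delta Q) !summxE; apply: eq_bigr => s' _.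
rewrite !summxE; apply: eq_bigr => t' _; rewrite [in LHS]mxE.
have [/Q0 -> | le_ss'] := ltnP s' s; first by rewrite !mxE !mul0r.
rewrite gen5_pivot; last lia.
by rewrite !mxE ps qt eqn_add2r -addnA eqn_add2r eq_sym.
Qed.

Lemma gen5_comb_inj Q : gen5_comb Q = 0 -> Q = 0.
Proof.
move=> Q_comb0; suff Q0 k (s : 'I_(m - 3)) t : (s < k)%N -> Q s t = 0.
  by apply/matrixP => s t; rewrite mxE (Q0 s.+1).
elim: k s t => // k IHk s t lt_sk.
have lt_sm : (s < m)%N by have := ltn_ord s; lia.
have lt_tn : (t + 3 < n)%N by have := ltn_ord t; lia.
rewrite -(@gen5_comb_pivot Q s t (Ordinal lt_sm) (Ordinal lt_tn)) ?Q_comb0 ?mxE // => s' t' lt_s's.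
by apply: IHk; lia.
Qed.

Lemma dim_S5 : \dim (@S5 C m n a) = ((m - 3) * (n - 3))%N.
Proof.
apply/eqP; rewrite eqn_leq (leq_trans (dim_span _)) ?size_allpairs ?size_iota //=.
pose f := linfun gen5_comb.
have f_inj : lker f == 0%VS.
  apply/lker0P => P Q; rewrite !lfunE /= => PQ; apply/eqP; rewrite -subr_eq0.
  by apply/eqP/gen5_comb_inj; rewrite linearB /= PQ subrr.
have <- : \dim (f @: fullv) = ((m - 3) * (n - 3))%N.
  by rewrite limg_dim_eq ?(eqP f_inj) ?capv0 // dimvf dim_matrix.
apply: dimvS; apply/subvP => _ /memv_imgP [Q _ ->]; rewrite lfunE /=.
apply: memv_suml => s _; apply: memv_suml => t _; apply/memvZ/memv_span.
by apply: allpairs_f; rewrite mem_iota leq_addl addnC ltn_add2l /=.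
Qed.

End Dimension.

Lemma exists_root_gt1 (R : rcfType) (a : R) : 3 < a -> exists2 al : R, 1 < al & a = al + al^-1 + 1.
Proof.
move=> lt3a; have D_ge0 : 0 <= (a - 1) ^+ 2 - 4 by rewrite subr_ge0; nra.
set s := Num.sqrt ((a - 1) ^+ 2 - 4); have s_ge0 : 0 <= s := sqrtr_ge0 _.
have s2 : s ^+ 2 = (a - 1) ^+ 2 - 4 by rewrite sqr_sqrtr.
set al := ((a - 1) + s) / 2; have gt1al : 1 < al by rewrite /al; lra.
exists al => //.
have al_root : al * ((a - 1) - al) = 1.
  have -> : al * ((a - 1) - al) = ((a - 1) ^+ 2 - s ^+ 2) / 4 by rewrite /al; field.
  by rewrite s2 opprB addrC subrK divff // pnatr_eq0.
have al0 : al != 0 by rewrite gt_eqF // (lt_trans ltr01).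
have -> : al^-1 = a - 1 - al by apply: (mulfI al0); rewrite mulfV.
ring.
Qed.

Lemma S5_real_low_rank_eq0 (R : rcfType) m n (a : R) (psi : 'M[R[i]]_(m, n)) :
  3 <= a -> psi \in @S5 R[i] m n (Complex a 0) -> (\rank psi <= 3)%N -> psi = 0.
Proof.
rewrite le_eqVlt => /predU1P [<- | /exists_root_gt1 [al gt1al ->]].
  rewrite -[Complex _ 0]/(real_complex R 3) rmorph_nat.
  by apply: S5_three_low_rank_eq0 => k l /eqP; rewrite eqr_nat => /eqP.
rewrite -[Complex _ 0]/(real_complex R (al + al^-1 + 1)) !rmorphD fmorphV rmorph1.
apply: S5_geom_low_rank_eq0 => k l /=; rewrite -!rmorphXn => /complexI.
by apply: ieexprIn; lra.
Qed.

Theorem theorem5p5 (R : realType) (m n : nat) (a : R) :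
  (4 <= minn m n)%N ->
  (a = 3 \/ 5 < a) ->
  (forall psi : 'M[R[i]]_(m, n),
      psi \in @S5 R[i] m n (Complex a 0) -> psi != 0 ->
      (3 < schmidt_rank psi)%N) /\
  \dim (@S5 R[i] m n (Complex a 0)) = ((m - 3) * (n - 3))%N.
Proof.
move=> _ a_cases; split=> [psi psiS psi0|]; last exact: dim_S5.
rewrite /schmidt_rank ltnNge; apply: contra psi0 => rk_psi; apply/eqP.
by apply: S5_real_low_rank_eq0 psiS rk_psi; case: a_cases => [->|]; lra.
Qed.
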